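(* Let $\mu$ be a boundedly supported Borel probability measure on $\mathbb{R}$ and let $q_0>1$ be such that $\alpha_0=\tau_\mu'(q_0)$ exists. For every $\kappa>0$ there is $\varepsilon=\varepsilon(\kappa,q_0)>0$ such that for all sufficiently large $m$: if $\mathcal{D}'\subset\mathcal{D}_m$ has at most $2^{(\tau_\mu^*(\alpha_0)-\kappa)m}$ elements, then \[ \sum_{J\in\mathcal{D}'}\mu(J)^{q_0}\le 2^{-(\tau_\mu(q_0)+\varepsilon)m}. \]
   Context: Logs base 2. $\mathcal{D}_m=\{[j2^{-m},(j+1)2^{-m}):j\in\mathbb{Z}\}$. For $q>0$, $\tau_\mu(q)=\liminf_{m\to\infty}-\frac1m\log\sum_{J\in\mathcal{D}_m,\mu(J)>0}\mu(J)^q$, and $\tau_\mu^*(\alpha)=\inf_{q>0}(\alpha q-\tau_\mu(q))$. *)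

From Stdlib Require Import Reals Lra Lia ZArith List ClassicalEpsilon.
Open Scope R_scope.

Inductive borel : (R -> Prop) -> Prop :=
| borel_interval (a b : R) : borel (fun x => a < x < b)
| borel_compl (A : R -> Prop) : borel A -> borel (fun x => ~ A x)
| borel_union (A : nat -> R -> Prop) :
    (forall n, borel (A n)) -> borel (fun x => exists n, A n x).

(** A Borel probability measure on R (values off Borel sets are irrelevant). *)
Definition is_borel_prob_measure (mu : (R -> Prop) -> R) : Prop :=
  (forall A B : R -> Prop, (forall x, A x <-> B x) -> mu A = mu B) /\
  (forall A, borel A -> 0 <= mu A) /\
  mu (fun _ => True) = 1 /\
  (forall A : nat -> R -> Prop,
     (forall n, borel (A n)) ->
     (forall i j x, i <> j -> A i x -> A j x -> False) ->
     infinite_sum (fun n => mu (A n)) (mu (fun x => exists n, A n x))).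

Definition bounded_support (mu : (R -> Prop) -> R) : Prop :=
  exists M : R, mu (fun x => M < Rabs x) = 0.

Definition log2 (x : R) : R := ln x / ln 2.

Definition rpow (x q : R) : R :=
  if Rlt_dec 0 x then Rpower x q else 0.

Definition dyadic (m : nat) (j : Z) : R -> Prop :=
  fun x => IZR j / 2 ^ m <= x < (IZR j + 1) / 2 ^ m.

Definition term (mu : (R -> Prop) -> R) (q : R) (m : nat) (j : Z) : R :=
  if Rlt_dec 0 (mu (dyadic m j)) then Rpower (mu (dyadic m j)) q else 0.

Definition partial_S (mu : (R -> Prop) -> R) (q : R) (m K : nat) : R :=
  sum_f_R0 (fun n => term mu q m (Z.of_nat n - Z.of_nat K)%Z) (2 * K).

(** S_m(q) = sum over J in D_m with mu(J) > 0 of mu(J)^q. *)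
Definition S_sum (mu : (R -> Prop) -> R) (q : R) (m : nat) : R :=
  epsilon (inhabits 0) (fun l => Un_cv (partial_S mu q m) l).

Definition is_liminf (a : nat -> R) (t : R) : Prop :=
  (forall e, 0 < e -> exists N, forall n, (N <= n)%nat -> t - e < a n) /\
  (forall e, 0 < e -> forall N, exists n, (N <= n)%nat /\ a n < t + e).

Definition Rliminf (a : nat -> R) : R := epsilon (inhabits 0) (is_liminf a).

Definition is_inf (E : R -> Prop) (t : R) : Prop :=
  (forall x, E x -> t <= x) /\ (forall u, (forall x, E x -> u <= x) -> u <= t).

Definition Rinf (E : R -> Prop) : R := epsilon (inhabits 0) (is_inf E).

Definition tau (mu : (R -> Prop) -> R) (q : R) : R :=
  Rliminf (fun m => - (/ INR m) * log2 (S_sum mu q m)).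

Definition tau_star (mu : (R -> Prop) -> R) (alpha : R) : R :=
  Rinf (fun y => exists q, 0 < q /\ y = alpha * q - tau mu q).

Definition sum_list (l : list R) : R := fold_right Rplus 0 l.

(* The L^q spectrum tau is the liminf of q |-> -(1/m) log2 S_m(q), and each of these
   functions is concave by Hoelder's inequality, so tau is concave.  Being
   differentiable at q0, tau lies below its tangent there, which gives
   tau*(alpha0) <= alpha0 q0 - tau(q0).  For q = q0 + d, Hoelder's inequality over
   the at most 2^((tau*(alpha0) - kappa) m) intervals of D' gives
     sum_{D'} mu(J)^q0 <= S_m(q)^(q0/q) * #D'^(1 - q0/q),
   and S_m(q) <= 2^(-(tau(q) - eta) m) for large m.  Since
   tau(q) >= tau(q0) + d (alpha0 - theta) for small d, the exponent is at most
   -(tau(q0) + eps) m with eps = kappa d / (2 q) once theta and eta are small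
   multiples of kappa. *)

From Stdlib Require Import Reals ZArith List Lia Lra.
From Stdlib Require Import ClassicalEpsilon FunctionalExtensionality PropExtensionality.
From Coquelicot Require Lim_seq.
Open Scope R_scope.

Lemma borel_ext A B : (forall x, A x <-> B x) -> borel A -> borel B.
Proof.
  intros HAB.
  replace B with A; [easy|].
  apply functional_extensionality; intros x; apply propositional_extensionality; auto.
Qed.

Lemma borel_empty : borel (fun _ => False).
Proof. apply borel_ext with (fun x => 0 < x < 0); [intros x; lra | constructor]. Qed.

Lemma borel_or A B : borel A -> borel B -> borel (fun x => A x \/ B x).
Proof.
  intros HA HB.
  apply borel_ext with (fun x => exists n : nat, (if Nat.eqb n 0 then A else B) x).
  - intros x; split.
    + intros [[|n] H]; auto.
    + intros [H|H]; [exists 0%nat | exists 1%nat]; auto.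
  - constructor; intros [|n]; auto.
Qed.

Lemma borel_and A B : borel A -> borel B -> borel (fun x => A x /\ B x).
Proof.
  intros HA HB.
  apply borel_ext with (fun x => ~ (~ A x \/ ~ B x)); [intros x; tauto|].
  constructor; apply borel_or; constructor; auto.
Qed.

Lemma borel_finite_union (A : nat -> R -> Prop) N :
  (forall n, borel (A n)) -> borel (fun x => exists n, (n <= N)%nat /\ A n x).
Proof.
  intros HA.
  apply borel_ext with (fun x => exists n, (if Nat.leb n N then A n else fun _ => False) x).
  - intros x; split; intros [n Hn]; exists n; destruct (Nat.leb_spec n N); intuition lia.
  - constructor; intros n; destruct (Nat.leb n N); auto using borel_empty.
Qed.

Lemma borel_lt b : borel (fun x => x < b).
Proof.
  apply borel_ext with (fun x => exists n : nat, b - INR n - 1 < x < b).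
  - intros x; split; [intros [n Hn]; lra|].
    intros Hx; destruct (INR_unbounded (b - x)) as [n Hn]; exists n; lra.
  - constructor; intros; constructor.
Qed.

Lemma borel_gt a : borel (fun x => a < x).
Proof.
  apply borel_ext with (fun x => exists n : nat, a < x < a + INR n + 1).
  - intros x; split; [intros [n Hn]; lra|].
    intros Hx; destruct (INR_unbounded (x - a)) as [n Hn]; exists n; lra.
  - constructor; intros; constructor.
Qed.

Lemma borel_dyadic m j : borel (dyadic m j).
Proof.
  apply borel_ext with (fun x => ~ x < IZR j / 2 ^ m /\ x < (IZR j + 1) / 2 ^ m).
  - intros x; unfold dyadic; lra.
  - apply borel_and; [constructor|]; apply borel_lt.
Qed.

Lemma borel_Rabs_gt M : borel (fun x => M < Rabs x).
Proof.
  apply borel_ext with (fun x => M < x \/ x < - M).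
  - intros x; unfold Rabs; destruct (Rcase_abs x); lra.
  - apply borel_or; [apply borel_gt | apply borel_lt].
Qed.

Lemma infinite_sum_eventually_0 (f : nat -> R) N :
  (forall n, (N < n)%nat -> f n = 0) -> infinite_sum f (sum_f_R0 f N).
Proof.
  intros Hf e He; exists N; intros n Hn.
  replace (sum_f_R0 f n) with (sum_f_R0 f N); [unfold Rdist; rewrite Rminus_diag, Rabs_R0; lra|].
  induction Hn as [|n Hn IH]; [easy|]; simpl; rewrite Hf, <- IH by lia; ring.
Qed.

Section ProbabilityMeasure.

Variable mu : (R -> Prop) -> R.
Hypothesis Hmu : is_borel_prob_measure mu.

Lemma mu_ext A B : (forall x, A x <-> B x) -> mu A = mu B.
Proof. apply Hmu. Qed.

Lemma mu_nonneg A : borel A -> 0 <= mu A.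
Proof. apply Hmu. Qed.

Lemma mu_empty : mu (fun _ => False) = 0.
Proof.
  destruct Hmu as (_ & _ & _ & Hadd).
  pose proof (Hadd (fun _ _ => False) (fun _ => borel_empty) (fun _ _ _ _ f _ => f)) as Hsum.
  rewrite (mu_ext _ (fun _ => False)) in Hsum by (intros x; split; [intros [_ []] | tauto]).
  set (c := mu (fun _ => False)) in *.
  (* the partial sums are (n+1) c, so they converge to c only if c = 0 *)
  assert (Hc : Rabs c <= 0).
  { apply Rle_plus_epsilon; intros e He.
    destruct (Hsum e He) as [N HN].
    specialize (HN (S N) (Nat.le_succ_diag_r N)); unfold Rdist in HN.
    rewrite sum_cte in HN.
    replace (c * INR (S (S N)) - c) with (c * INR (S N)) in HN by (rewrite (S_INR (S N)); ring).
    rewrite Rabs_mult, (Rabs_pos_eq (INR _)) in HN by apply pos_INR.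
    assert (1 <= INR (S N)) by (rewrite S_INR; pose proof (pos_INR N); lra).
    pose proof (Rabs_pos c); nra. }
  revert Hc; unfold Rabs; destruct (Rcase_abs c); lra.
Qed.

Lemma mu_finite_union (A : nat -> R -> Prop) N :
  (forall n, borel (A n)) ->
  (forall i j x, (i <= N)%nat -> (j <= N)%nat -> i <> j -> A i x -> A j x -> False) ->
  mu (fun x => exists n, (n <= N)%nat /\ A n x) = sum_f_R0 (fun n => mu (A n)) N.
Proof.
  intros HA Hdisj.
  set (F n := if Nat.leb n N then A n else fun _ => False).
  assert (HF : forall n x, F n x <-> (n <= N)%nat /\ A n x).
  { intros n x; unfold F; destruct (Nat.leb_spec n N); intuition lia. }
  destruct Hmu as (_ & _ & _ & Hadd).
  specialize (Hadd F).
  rewrite (mu_ext _ (fun x => exists n, (n <= N)%nat /\ A n x)) in Hadd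
    by (intros x; split; intros [n Hn]; exists n; apply HF; auto).
  rewrite (uniqueness_sum (fun n => mu (F n)) _ (sum_f_R0 (fun n => mu (F n)) N)).
  - apply sum_eq; intros n Hn; apply mu_ext; intros x; rewrite HF; intuition.
  - apply Hadd.
    + intros n; unfold F; destruct (Nat.leb n N); auto using borel_empty.
    + intros i j x Hij Hi Hj; apply HF in Hi, Hj; eapply Hdisj; intuition eauto.
  - apply infinite_sum_eventually_0; intros n Hn.
    rewrite (mu_ext _ (fun _ => False)) by (intros x; rewrite HF; intuition lia).
    apply mu_empty.
Qed.

Lemma mu_or A B : borel A -> borel B -> (forall x, A x -> B x -> False) ->
  mu (fun x => A x \/ B x) = mu A + mu B.
Proof.
  intros HA HB Hdisj.
  set (F n := if Nat.eqb n 0 then A else B).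
  rewrite (mu_ext _ (fun x => exists n, (n <= 1)%nat /\ F n x)).
  - rewrite mu_finite_union; [reflexivity| |].
    + intros [|n]; auto.
    + intros [|[|i]] [|[|j]] x Hi Hj Hij; simpl; try lia; eauto.
  - intros x; split.
    + intros [H|H]; [exists 0%nat | exists 1%nat]; auto.
    + intros [[|n] [_ H]]; auto.
Qed.

Lemma mu_compl A : borel A -> mu A + mu (fun x => ~ A x) = 1.
Proof.
  intros HA.
  destruct Hmu as (_ & _ & Htot & _).
  rewrite <- mu_or, <- Htot by (auto; constructor; auto).
  apply mu_ext; intros x; split; auto; intros _; apply Classical_Prop.classic.
Qed.

Lemma mu_mono A B : borel A -> borel B -> (forall x, A x -> B x) -> mu A <= mu B.
Proof.
  intros HA HB HAB.
  assert (HBA : borel (fun x => B x /\ ~ A x)) by (apply borel_and; [|constructor]; auto).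
  rewrite (mu_ext B (fun x => A x \/ (B x /\ ~ A x))), mu_or; auto; [| tauto |].
  - pose proof (mu_nonneg _ HBA); lra.
  - intros x; split; [|intuition]; intros Hx; destruct (Classical_Prop.classic (A x)); auto.
Qed.

Lemma mu_le_1 A : borel A -> mu A <= 1.
Proof.
  intros HA; rewrite <- (mu_compl A HA).
  assert (borel (fun x => ~ A x)) by (constructor; auto).
  pose proof (mu_nonneg (fun x => ~ A x) H); lra.
Qed.

End ProbabilityMeasure.

Definition lsum {A} (f : A -> R) (l : list A) : R := sum_list (map f l).

Section ListSums.

Context {A : Type}.
Implicit Types (f g : A -> R) (l : list A).

Lemma lsum_cons f x l : lsum f (x :: l) = f x + lsum f l.
Proof. reflexivity. Qed.

Lemma lsum_app f l1 l2 : lsum f (l1 ++ l2) = lsum f l1 + lsum f l2.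
Proof. induction l1 as [|x l1 IH]; simpl; [|rewrite !lsum_cons, IH]; unfold lsum; simpl; ring. Qed.

Lemma lsum_le f g l : (forall x, In x l -> f x <= g x) -> lsum f l <= lsum g l.
Proof.
  induction l as [|x l IH]; intros H; [apply Rle_refl|].
  rewrite !lsum_cons; apply Rplus_le_compat; [|apply IH]; intros; apply H; simpl; auto.
Qed.

Lemma lsum_ext f g l : (forall x, In x l -> f x = g x) -> lsum f l = lsum g l.
Proof. intros H; apply Rle_antisym; apply lsum_le; intros x Hx; rewrite H; auto; lra. Qed.

Lemma lsum_const c l : lsum (fun _ => c) l = INR (length l) * c.
Proof.
  induction l as [|x l IH]; [unfold lsum; simpl; ring|].
  rewrite lsum_cons, IH, length_cons, S_INR; ring.
Qed.

Lemma lsum_nonneg f l : (forall x, In x l -> 0 <= f x) -> 0 <= lsum f l.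
Proof. intros H; rewrite <- (Rmult_0_r (INR (length l))), <- lsum_const; apply lsum_le, H. Qed.

Lemma lsum_plus f g l : lsum (fun x => f x + g x) l = lsum f l + lsum g l.
Proof. induction l as [|x l IH]; [unfold lsum; simpl; ring|]. rewrite !lsum_cons, IH; ring. Qed.

Lemma lsum_mult_l c f l : lsum (fun x => c * f x) l = c * lsum f l.
Proof. induction l as [|x l IH]; [unfold lsum; simpl; ring|]. rewrite !lsum_cons, IH; ring. Qed.

Lemma lsum_ge_elem f l x : In x l -> (forall y, In y l -> 0 <= f y) -> f x <= lsum f l.
Proof.
  intros Hx Hf; apply in_split in Hx as (l1 & l2 & ->).
  rewrite lsum_app, lsum_cons.
  assert (0 <= lsum f l1) by (apply lsum_nonneg; intros; apply Hf, in_or_app; auto).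
  assert (0 <= lsum f l2) by (apply lsum_nonneg; intros; apply Hf, in_or_app; simpl; auto).
  lra.
Qed.

Lemma lsum_incl_le f l W : NoDup l -> incl l W -> (forall x, In x W -> 0 <= f x) ->
  lsum f l <= lsum f W.
Proof.
  revert W; induction l as [|x l IH]; intros W Hl HlW Hf; [now apply lsum_nonneg|].
  destruct (in_split x W (HlW x (in_eq x l))) as (W1 & W2 & ->).
  apply NoDup_cons_iff in Hl as [Hx Hl].
  rewrite lsum_app, !lsum_cons.
  enough (lsum f l <= lsum f (W1 ++ W2)) by (rewrite lsum_app in *; lra).
  apply IH; auto.
  - intros y Hy; destruct (in_app_or _ _ _ (HlW y (in_cons x y l Hy))) as [|[->|]];
      [apply in_or_app; auto | contradiction | apply in_or_app; auto].
  - intros y Hy; apply Hf; apply in_app_or in Hy as [|]; apply in_or_app; simpl; auto.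
Qed.

Lemma lsum_incl_eq f l W : NoDup l -> NoDup W -> incl l W ->
  (forall x, In x W -> ~ In x l -> f x = 0) -> lsum f W = lsum f l.
Proof.
  revert W; induction l as [|x l IH]; intros W Hl HW HlW Hf.
  - rewrite (lsum_ext f (fun _ => 0)), lsum_const by (intros; apply Hf; auto).
    unfold lsum; simpl; ring.
  - destruct (in_split x W (HlW x (in_eq x l))) as (W1 & W2 & ->).
    apply NoDup_cons_iff in Hl as [Hx Hl].
    apply NoDup_remove in HW as [HW HxW].
    rewrite lsum_app, !lsum_cons, <- (IH (W1 ++ W2)), lsum_app; auto; [ring| |].
    + intros y Hy; destruct (in_app_or _ _ _ (HlW y (in_cons x y l Hy))) as [|[->|]];
        [apply in_or_app; auto | contradiction | apply in_or_app; auto].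
    + intros y Hy Hyl; apply Hf; [apply in_app_or in Hy as [|]; apply in_or_app; simpl; auto|].
      intros [->|]; contradiction.
Qed.

Lemma lsum_exists_ge_mean f l : l <> nil -> 1 <= lsum f l ->
  exists x, In x l /\ / INR (length l) <= f x.
Proof.
  intros Hl H1.
  assert (Hn : 0 < INR (length l)) by (apply lt_0_INR; destruct l; simpl; [congruence | lia]).
  apply Classical_Prop.NNPP; intros Hno.
  assert (Hlt : lsum f l < lsum (fun _ => / INR (length l)) l).
  { destruct l as [|x l]; [congruence|].
    rewrite !lsum_cons; apply Rplus_lt_le_compat.
    - apply Rnot_le_lt; intros Hx; apply Hno; exists x; simpl; auto.
    - apply lsum_le; intros y Hy; apply Rlt_le, Rnot_le_lt; intros H.
      apply Hno; exists y; simpl; auto. }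
  rewrite lsum_const, Rinv_r in Hlt by lra; lra.
Qed.

End ListSums.

Lemma sum_f_R0_lsum g n : sum_f_R0 g n = lsum g (seq 0 (S n)).
Proof.
  induction n as [|n IH]; [unfold lsum; simpl; ring|].
  rewrite seq_S, lsum_app, <- IH; unfold lsum; simpl; ring.
Qed.

Lemma rpow_pos x q : 0 < x -> rpow x q = Rpower x q.
Proof. intros H; unfold rpow; destruct (Rlt_dec 0 x); [auto | lra]. Qed.

Lemma rpow_nonpos x q : x <= 0 -> rpow x q = 0.
Proof. intros H; unfold rpow; destruct (Rlt_dec 0 x); [lra | auto]. Qed.

Lemma Rpower_gt_0 x q : 0 < Rpower x q.
Proof. apply exp_pos. Qed.

Lemma rpow_ge_0 x q : 0 <= rpow x q.
Proof. unfold rpow; destruct (Rlt_dec 0 x); [apply Rlt_le, Rpower_gt_0 | lra]. Qed.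

Lemma rpow_gt_0 x q : 0 < x -> 0 < rpow x q.
Proof. intros; rewrite rpow_pos; auto using Rpower_gt_0. Qed.

Lemma rpow_1_l q : rpow 1 q = 1.
Proof. rewrite rpow_pos by lra; unfold Rpower; rewrite ln_1, Rmult_0_r; apply exp_0. Qed.

Lemma rpow_le_1 x q : x <= 1 -> 0 < q -> rpow x q <= 1.
Proof.
  intros Hx1 Hq; destruct (Rlt_dec 0 x) as [Hx|Hx]; [|rewrite rpow_nonpos; lra].
  rewrite <- (rpow_1_l q), !rpow_pos by lra; apply Rle_Rpower_l; lra.
Qed.

Lemma rpow_le_compat a b q : 0 <= a <= b -> 0 <= q -> rpow a q <= rpow b q.
Proof.
  intros Hab Hq; destruct (Rlt_dec 0 a) as [Ha|Ha].
  2: rewrite (rpow_nonpos a); auto using rpow_ge_0; lra.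
  rewrite !rpow_pos by lra; apply Rle_Rpower_l; lra.
Qed.

Lemma rpow_rpow x a b : rpow (rpow x a) b = rpow x (a * b).
Proof.
  destruct (Rlt_dec 0 x) as [Hx|Hx].
  - rewrite (rpow_pos x a), !rpow_pos by auto using Rpower_gt_0; apply Rpower_mult.
  - rewrite (rpow_nonpos x), !rpow_nonpos; lra.
Qed.

Lemma rpow_plus x a b : rpow x (a + b) = rpow x a * rpow x b.
Proof.
  destruct (Rlt_dec 0 x) as [Hx|Hx].
  - rewrite !rpow_pos by auto; apply Rpower_plus.
  - rewrite !rpow_nonpos by lra; ring.
Qed.

Lemma rpow_div a c q : 0 < c -> rpow (a / c) q = rpow a q / rpow c q.
Proof.
  intros Hc; destruct (Rlt_dec 0 a) as [Ha|Ha].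
  - rewrite !rpow_pos by (auto; apply Rdiv_lt_0_compat; auto).
    unfold Rpower, Rdiv.
    rewrite ln_mult, ln_Rinv, Rmult_plus_distr_l, exp_plus by (auto; apply Rinv_0_lt_compat; auto).
    rewrite <- exp_Ropp; f_equal; f_equal; ring.
  - assert (0 < / c) by (apply Rinv_0_lt_compat; auto).
    rewrite (rpow_nonpos a), rpow_nonpos by (unfold Rdiv; nra); unfold Rdiv; ring.
Qed.

Lemma rpow_Rpower_2 x c : rpow (Rpower 2 x) c = Rpower 2 (x * c).
Proof. rewrite rpow_pos by apply Rpower_gt_0; apply Rpower_mult. Qed.

Lemma exp_convex s t l : 0 < l < 1 -> exp (l * s + (1 - l) * t) <= l * exp s + (1 - l) * exp t.
Proof.
  intros Hl; set (c := l * s + (1 - l) * t).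
  (* the tangent line of exp at c lies below exp *)
  pose proof (exp_ineq1_le (s - c)); pose proof (exp_ineq1_le (t - c)); pose proof (exp_pos c).
  replace (exp s) with (exp c * exp (s - c)) by (rewrite <- exp_plus; f_equal; ring).
  replace (exp t) with (exp c * exp (t - c)) by (rewrite <- exp_plus; f_equal; ring).
  assert (0 <= l * exp c * (exp (s - c) - (1 + (s - c))))
    by (apply Rmult_le_pos; [apply Rmult_le_pos|]; lra).
  assert (0 <= (1 - l) * exp c * (exp (t - c) - (1 + (t - c))))
    by (apply Rmult_le_pos; [apply Rmult_le_pos|]; lra).
  assert (l * (s - c) + (1 - l) * (t - c) = 0) by (unfold c; ring).
  nra.
Qed.

Lemma young a b l : 0 <= a -> 0 <= b -> 0 < l < 1 ->
  rpow a l * rpow b (1 - l) <= l * a + (1 - l) * b.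
Proof.
  intros Ha Hb Hl.
  destruct (Rlt_dec 0 a) as [Ha'|Ha']; [|rewrite (rpow_nonpos a) by lra; nra].
  destruct (Rlt_dec 0 b) as [Hb'|Hb']; [|rewrite (rpow_nonpos b) by lra; nra].
  rewrite !rpow_pos by auto; unfold Rpower; rewrite <- exp_plus.
  pose proof (exp_convex (ln a) (ln b) l Hl) as Hc; rewrite !exp_ln in Hc by auto.
  exact Hc.
Qed.

Lemma lsum_holder {A} (u v : A -> R) l lam :
  (forall x, 0 <= u x) -> (forall x, 0 <= v x) -> 0 < lam < 1 ->
  lsum (fun x => rpow (u x) lam * rpow (v x) (1 - lam)) l
    <= rpow (lsum u l) lam * rpow (lsum v l) (1 - lam).
Proof.
  intros Hu Hv Hl.
  set (U := lsum u l); set (V := lsum v l).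
  assert (HU : 0 <= U) by (apply lsum_nonneg; auto).
  assert (HV : 0 <= V) by (apply lsum_nonneg; auto).
  pose proof (rpow_ge_0 U lam); pose proof (rpow_ge_0 V (1 - lam)).
  assert (Hdeg : forall w : A -> R, (forall x, 0 <= w x) -> lsum w l = 0 ->
            forall x, In x l -> w x = 0).
  { intros w Hw Hs x Hx.
    pose proof (lsum_ge_elem w l x Hx (fun y _ => Hw y)); pose proof (Hw x); lra. }
  destruct (Req_dec U 0) as [HU0|HU0].
  { rewrite (lsum_ext _ (fun _ => 0)), lsum_const by
      (intros x Hx; rewrite (rpow_nonpos (u x)), Rmult_0_l; [|rewrite (Hdeg u)]; auto; lra).
    nra. }
  destruct (Req_dec V 0) as [HV0|HV0].
  { rewrite (lsum_ext _ (fun _ => 0)), lsum_const by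
      (intros x Hx; rewrite (rpow_nonpos (v x)), Rmult_0_r; [|rewrite (Hdeg v)]; auto; lra).
    nra. }
  set (P := rpow U lam * rpow V (1 - lam)).
  assert (HP : 0 < P) by (apply Rmult_lt_0_compat; apply rpow_gt_0; lra).
  (* Young's inequality for the normalized terms u x / U and v x / V *)
  apply Rle_trans with (lsum (fun x => P * (lam / U * u x + (1 - lam) / V * v x)) l).
  - apply lsum_le; intros x _.
    assert (Y := young (u x / U) (v x / V) lam).
    rewrite !rpow_div in Y by lra.
    assert (HU' : 0 < / U) by (apply Rinv_0_lt_compat; lra).
    assert (HV' : 0 < / V) by (apply Rinv_0_lt_compat; lra).
    specialize (Y ltac:(apply Rmult_le_pos; auto; lra) ltac:(apply Rmult_le_pos; auto; lra) Hl).
    replace (rpow (u x) lam * rpow (v x) (1 - lam))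
      with (P * (rpow (u x) lam / rpow U lam * (rpow (v x) (1 - lam) / rpow V (1 - lam))))
      by (unfold P; field; split; apply Rgt_not_eq, rpow_gt_0; lra).
    apply Rmult_le_compat_l; [lra|]; unfold Rdiv in *; lra.
  - rewrite lsum_mult_l, lsum_plus, !lsum_mult_l; fold U V.
    replace (lam / U * U + (1 - lam) / V * V) with 1 by (field; lra); lra.
Qed.

Lemma Rdiv_in_01 p q : 0 < p < q -> 0 < p / q < 1.
Proof.
  intros Hpq; split; [apply Rdiv_lt_0_compat; lra|].
  apply Rmult_lt_reg_r with q; [lra|]; unfold Rdiv; rewrite Rmult_assoc, Rinv_l; lra.
Qed.

Lemma lsum_rpow_interpolate {A} (f : A -> R) l p q : (forall x, 0 <= f x) -> 0 < p < q ->
  lsum (fun x => rpow (f x) p) l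
    <= rpow (lsum (fun x => rpow (f x) q) l) (p / q) * rpow (INR (length l)) (1 - p / q).
Proof.
  intros Hf Hpq.
  rewrite <- (Rmult_1_r (INR _)), <- lsum_const.
  eapply Rle_trans; [|apply lsum_holder; auto using rpow_ge_0, Rdiv_in_01; intros; lra].
  apply Req_le, lsum_ext; intros x _.
  rewrite rpow_1_l, Rmult_1_r, rpow_rpow; f_equal; field; lra.
Qed.

Lemma Rdiv_le_iff a b p : 0 < p -> (a / p <= b <-> a <= b * p).
Proof.
  intros Hp; unfold Rdiv; split; intros H.
  - apply Rmult_le_compat_r with (r := p) in H; [|lra].
    rewrite Rmult_assoc, Rinv_l, Rmult_1_r in H by lra; exact H.
  - apply Rmult_le_reg_r with p; [lra|]; rewrite Rmult_assoc, Rinv_l, Rmult_1_r by lra; exact H.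
Qed.

Lemma Rlt_div_iff a b p : 0 < p -> (b < a / p <-> b * p < a).
Proof.
  intros Hp; unfold Rdiv; split; intros H.
  - apply Rmult_lt_compat_r with (r := p) in H; [|lra].
    rewrite Rmult_assoc, Rinv_l, Rmult_1_r in H by lra; exact H.
  - apply Rmult_lt_reg_r with p; [lra|]; rewrite Rmult_assoc, Rinv_l, Rmult_1_r by lra; exact H.
Qed.

Lemma pow2_pos m : 0 < 2 ^ m.
Proof. apply pow_lt; lra. Qed.

Lemma dyadic_iff m j x : dyadic m j x <-> IZR j <= x * 2 ^ m < IZR j + 1.
Proof. unfold dyadic; rewrite Rdiv_le_iff, Rlt_div_iff by apply pow2_pos; tauto. Qed.

Lemma dyadic_unique m i j x : dyadic m i x -> dyadic m j x -> i = j.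
Proof.
  rewrite !dyadic_iff; intros Hi Hj.
  assert (Hij : IZR i < IZR (j + 1)) by (rewrite plus_IZR; lra).
  assert (Hji : IZR j < IZR (i + 1)) by (rewrite plus_IZR; lra).
  apply lt_IZR in Hij, Hji; lia.
Qed.

Lemma dyadic_exists m x : exists j, dyadic m j x.
Proof.
  exists (up (x * 2 ^ m) - 1)%Z; rewrite dyadic_iff, minus_IZR.
  destruct (archimed (x * 2 ^ m)); lra.
Qed.

Definition dyadic_radius (B : R) (m : nat) : nat := Z.to_nat (up (B * 2 ^ m)).

Lemma dyadic_radius_bounds B m : 0 <= B ->
  B * 2 ^ m < INR (dyadic_radius B m) <= B * 2 ^ m + 1.
Proof.
  intros HB; pose proof (pow2_pos m); destruct (archimed (B * 2 ^ m)).
  unfold dyadic_radius; rewrite INR_IZR_INZ, Z2Nat.id by (apply le_IZR; nra); lra.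
Qed.

Lemma dyadic_index_le B m j x : 0 <= B -> dyadic m j x -> Rabs x <= B ->
  (Z.abs j <= Z.of_nat (dyadic_radius B m))%Z.
Proof.
  intros HB Hj Hx; rewrite dyadic_iff in Hj.
  destruct (dyadic_radius_bounds B m HB) as [HK _]; rewrite INR_IZR_INZ in HK.
  set (K := Z.of_nat (dyadic_radius B m)) in *.
  pose proof (pow2_pos m).
  assert (- B <= x <= B) by (revert Hx; unfold Rabs; destruct (Rcase_abs x); lra).
  assert (Hup : IZR j < IZR K) by nra.
  assert (Hlo : IZR (- K) < IZR (j + 1)) by (rewrite opp_IZR, plus_IZR; nra).
  apply lt_IZR in Hup, Hlo; lia.
Qed.

Definition window (K : nat) : list Z :=
  map (fun n => Z.of_nat n - Z.of_nat K)%Z (seq 0 (S (2 * K))).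

Lemma In_window K j : In j (window K) <-> (Z.abs j <= Z.of_nat K)%Z.
Proof.
  unfold window; rewrite in_map_iff; split.
  - intros (n & <- & Hn); apply in_seq in Hn; lia.
  - intros H; exists (Z.to_nat (j + Z.of_nat K)); rewrite in_seq; lia.
Qed.

Lemma NoDup_window K : NoDup (window K).
Proof. apply NoDup_map_NoDup_ForallPairs; [intros x y _ _ H; lia | apply seq_NoDup]. Qed.

Lemma length_window K : length (window K) = S (2 * K).
Proof. unfold window; rewrite length_map, length_seq; auto. Qed.

Lemma window_neq_nil K : window K <> nil.
Proof. unfold window; simpl; discriminate. Qed.

Lemma window_incl K K' : (K <= K')%nat -> incl (window K) (window K').
Proof. intros HK j; rewrite !In_window; lia. Qed.

Lemma partial_S_window mu q m K :
  partial_S mu q m K = lsum (fun j => rpow (mu (dyadic m j)) q) (window K).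
Proof.
  unfold partial_S, window; rewrite sum_f_R0_lsum; unfold lsum; rewrite map_map; reflexivity.
Qed.

Lemma ln2_pos : 0 < ln 2.
Proof. pose proof ln_lt_2; lra. Qed.

Lemma log2_le x y : 0 < x -> x <= y -> log2 x <= log2 y.
Proof.
  intros Hx [Hxy|<-]; [|apply Rle_refl].
  unfold log2, Rdiv; apply Rmult_le_compat_r; [left; apply Rinv_0_lt_compat, ln2_pos|].
  left; apply ln_increasing; auto.
Qed.

Lemma log2_mult x y : 0 < x -> 0 < y -> log2 (x * y) = log2 x + log2 y.
Proof. intros; unfold log2; rewrite ln_mult by auto; field; apply Rgt_not_eq, ln2_pos. Qed.

Lemma log2_pow2 m : log2 (2 ^ m) = INR m.
Proof. unfold log2; rewrite ln_pow by lra; field; apply Rgt_not_eq, ln2_pos. Qed.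

Lemma log2_Rpower x q : log2 (Rpower x q) = q * log2 x.
Proof. unfold log2; rewrite ln_Rpower; unfold Rdiv; ring. Qed.

Lemma log2_inv x : 0 < x -> log2 (/ x) = - log2 x.
Proof. intros; unfold log2; rewrite ln_Rinv by auto; unfold Rdiv; ring. Qed.

Lemma log2_ge_0 x : 1 <= x -> 0 <= log2 x.
Proof.
  intros Hx; apply Rle_trans with (log2 1); [unfold log2; rewrite ln_1; lra | apply log2_le; lra].
Qed.

Lemma Rpower_2_log2 x : 0 < x -> Rpower 2 (log2 x) = x.
Proof.
  intros Hx; unfold Rpower, log2.
  replace (ln x / ln 2 * ln 2) with (ln x) by (field; apply Rgt_not_eq, ln2_pos).
  apply exp_ln, Hx.
Qed.

Lemma is_liminf_Rliminf (a : nat -> R) lo hi N :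
  (forall m, (N <= m)%nat -> lo <= a m <= hi) -> is_liminf a (Rliminf a).
Proof.
  intros Hb; unfold Rliminf; apply epsilon_spec.
  destruct (Lim_seq.ex_LimInf_seq a) as [[t| |] Ht]; simpl in Ht.
  - exists t; split.
    + intros e He; destruct (Ht (mkposreal e He)) as [_ [M HM]]; exists M; auto.
    + intros e He; apply (Ht (mkposreal e He)).
  - exfalso; destruct (Ht hi) as [M HM].
    specialize (HM (N + M)%nat ltac:(lia)); specialize (Hb (N + M)%nat ltac:(lia)); lra.
  - exfalso; destruct (Ht lo N) as [n [Hn Hl]]; specialize (Hb n Hn); lra.
Qed.

Lemma is_liminf_combination (a b c : nat -> R) ta tb tc wa wc N :
  0 <= wa -> 0 <= wc ->
  (forall m, (N <= m)%nat -> wa * a m + wc * c m <= (wa + wc) * b m) ->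
  is_liminf a ta -> is_liminf b tb -> is_liminf c tc ->
  wa * ta + wc * tc <= (wa + wc) * tb.
Proof.
  intros Hwa Hwc Habc [Ha _] [_ Hb] [Hc _].
  apply Rle_plus_epsilon; intros e He.
  set (e' := e / (2 * (wa + wc) + 2)).
  assert (He' : 0 < e') by (apply Rdiv_lt_0_compat; lra).
  assert (Hee' : 2 * (wa + wc) * e' <= e).
  { assert (e' * (2 * (wa + wc) + 2) = e) by (unfold e'; field; lra); nra. }
  destruct (Ha e' He') as [Na HNa]; destruct (Hc e' He') as [Nc HNc].
  destruct (Hb e' He' (N + Na + Nc)%nat) as (m & Hm & Hbm).
  specialize (HNa m ltac:(lia)); specialize (HNc m ltac:(lia)); specialize (Habc m ltac:(lia)).
  assert (wa * (ta - e') <= wa * a m) by (apply Rmult_le_compat_l; lra).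
  assert (wc * (tc - e') <= wc * c m) by (apply Rmult_le_compat_l; lra).
  assert ((wa + wc) * b m <= (wa + wc) * (tb + e')) by (apply Rmult_le_compat_l; lra).
  lra.
Qed.

Definition concave_on_pos (f : R -> R) : Prop :=
  forall x y z, 0 < x < y -> y < z -> (z - y) * f x + (y - x) * f z <= (z - x) * f y.

Lemma derivable_pt_lim_right_bounds f q0 a e : derivable_pt_lim f q0 a -> 0 < e ->
  exists d, 0 < d /\ forall h, 0 < h < d -> h * (a - e) < f (q0 + h) - f q0 < h * (a + e).
Proof.
  intros Hd He; destruct (Hd e He) as [[d Hdp] Hdd]; exists d; split; auto.
  intros h Hh; specialize (Hdd h ltac:(lra) ltac:(simpl; rewrite Rabs_right; lra)).
  apply Rabs_def2 in Hdd.
  replace (f (q0 + h) - f q0) with (h * ((f (q0 + h) - f q0) / h)) by (field; lra).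
  split; apply Rmult_lt_compat_l; lra.
Qed.

Lemma concave_le_tangent f q0 a q : concave_on_pos f -> 0 < q0 ->
  derivable_pt_lim f q0 a -> 0 < q -> f q <= f q0 + a * (q - q0).
Proof.
  intros Hf Hq0 Hd Hq.
  destruct (Rtotal_order q q0) as [Hlt|[->|Hgt]]; [| lra |].
  - (* the chord slope on [q, q0] dominates the slopes to the right of q0 *)
    apply Rle_plus_epsilon; intros e He.
    destruct (derivable_pt_lim_right_bounds f q0 a (e / (q0 - q)) Hd) as (d & Hd0 & Hb);
      [apply Rdiv_lt_0_compat; lra|].
    specialize (Hb (d / 2) ltac:(lra)) as [Hb _].
    pose proof (Hf q q0 (q0 + d / 2) ltac:(lra) ltac:(lra)) as Hc.
    replace (a - e / (q0 - q)) with ((a * (q0 - q) - e) / (q0 - q)) in Hb by (field; lra).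
    apply Rmult_le_reg_l with (d / 2); [lra|].
    assert (Hm : (q0 - q) * (d / 2 * ((a * (q0 - q) - e) / (q0 - q)))
                  <= (q0 - q) * (f (q0 + d / 2) - f q0)) by (apply Rmult_le_compat_l; lra).
    replace ((q0 - q) * (d / 2 * ((a * (q0 - q) - e) / (q0 - q))))
      with (d / 2 * (a * (q0 - q) - e)) in Hm by (field; lra).
    nra.
  - (* the slopes just right of q0 dominate the chord slope on [q0, q] *)
    apply Rle_plus_epsilon; intros e He.
    destruct (derivable_pt_lim_right_bounds f q0 a (e / (q - q0)) Hd) as (d & Hd0 & Hb);
      [apply Rdiv_lt_0_compat; lra|].
    set (h := Rmin (d / 2) ((q - q0) / 2)).
    assert (Hh : 0 < h <= d / 2 /\ h <= (q - q0) / 2)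
      by (unfold h; split; [split; [apply Rmin_glb_lt|apply Rmin_l]|apply Rmin_r]; lra).
    specialize (Hb h ltac:(lra)) as [_ Hb].
    pose proof (Hf q0 (q0 + h) q ltac:(lra) ltac:(lra)) as Hc.
    replace (a + e / (q - q0)) with ((a * (q - q0) + e) / (q - q0)) in Hb by (field; lra).
    apply Rmult_le_reg_l with h; [lra|].
    assert (Hm : (q - q0) * (f (q0 + h) - f q0)
                  <= (q - q0) * (h * ((a * (q - q0) + e) / (q - q0))))
      by (apply Rmult_le_compat_l; lra).
    replace ((q - q0) * (h * ((a * (q - q0) + e) / (q - q0))))
      with (h * (a * (q - q0) + e)) in Hm by (field; lra).
    nra.
Qed.

Lemma Rinf_le (E : R -> Prop) lo x : (forall y, E y -> lo <= y) -> E x -> Rinf E <= x.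
Proof.
  intros Hlo Hx.
  assert (Hinf : exists t, is_inf E t).
  { destruct (completeness (fun y => E (- y))) as [s [Hub Hlub]].
    - exists (- lo); intros y Hy; apply Hlo in Hy; lra.
    - exists (- x); rewrite Ropp_involutive; auto.
    - exists (- s); split.
      + intros y Hy; enough (- y <= s) by lra; apply Hub; rewrite Ropp_involutive; auto.
      + intros u Hu; enough (s <= - u) by lra; apply Hlub; intros y Hy; apply Hu in Hy; lra. }
  unfold Rinf; apply (epsilon_spec (inhabits 0) _ Hinf), Hx.
Qed.

Lemma bounded_support_radius mu : is_borel_prob_measure mu -> bounded_support mu ->
  exists B, 0 <= B /\ mu (fun x => B < Rabs x) = 0.
Proof.
  intros Hmu [M HM]; exists (Rabs M); split; [apply Rabs_pos|].
  apply Rle_antisym; [|apply mu_nonneg, borel_Rabs_gt; auto].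
  rewrite <- HM; apply mu_mono; auto using borel_Rabs_gt.
  intros x; pose proof (Rle_abs M); lra.
Qed.

Definition tau_seq (mu : (R -> Prop) -> R) (q : R) (m : nat) : R :=
  - (/ INR m) * log2 (S_sum mu q m).

Section BoundedSupport.

Variables (mu : (R -> Prop) -> R) (B : R).
Hypotheses (Hmu : is_borel_prob_measure mu) (HB : 0 <= B)
  (Hsupp : mu (fun x => B < Rabs x) = 0).

Lemma mu_dyadic_far m j : (Z.of_nat (dyadic_radius B m) < Z.abs j)%Z -> mu (dyadic m j) = 0.
Proof.
  intros Hj; apply Rle_antisym; [|apply mu_nonneg, borel_dyadic; auto].
  rewrite <- Hsupp; apply mu_mono; auto using borel_dyadic, borel_Rabs_gt.
  intros x Hx; apply Rnot_le_lt; intros Hx'.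
  pose proof (dyadic_index_le B m j x HB Hx Hx'); lia.
Qed.

Lemma partial_S_cv q m K : (dyadic_radius B m <= K)%nat ->
  Un_cv (partial_S mu q m) (lsum (fun j => rpow (mu (dyadic m j)) q) (window K)).
Proof.
  intros HK e He; exists K; intros n Hn.
  rewrite partial_S_window, lsum_incl_eq with (l := window K);
    auto using NoDup_window, window_incl.
  - unfold Rdist; rewrite Rminus_diag, Rabs_R0; lra.
  - intros j _ Hj; rewrite In_window in Hj; rewrite mu_dyadic_far by lia.
    apply rpow_nonpos; lra.
Qed.

Lemma S_sum_window q m K : (dyadic_radius B m <= K)%nat ->
  S_sum mu q m = lsum (fun j => rpow (mu (dyadic m j)) q) (window K).
Proof.
  intros HK; apply UL_sequence with (partial_S mu q m); [|apply partial_S_cv, HK].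
  unfold S_sum; apply epsilon_spec; eexists; apply partial_S_cv, HK.
Qed.

Lemma mass_window m : 1 <= lsum (fun j => mu (dyadic m j)) (window (dyadic_radius B m)).
Proof.
  set (K := dyadic_radius B m).
  set (A n := dyadic m (Z.of_nat n - Z.of_nat K)).
  replace (lsum _ (window K)) with (sum_f_R0 (fun n => mu (A n)) (2 * K))
    by (rewrite sum_f_R0_lsum; unfold lsum, window; rewrite map_map; reflexivity).
  rewrite <- mu_finite_union; auto.
  - rewrite <- (mu_compl mu Hmu _ (borel_Rabs_gt B)), Hsupp, Rplus_0_l.
    apply mu_mono; auto.
    { constructor; apply borel_Rabs_gt. }
    { apply borel_finite_union; intros; apply borel_dyadic. }
    intros x Hx; apply Rnot_lt_le in Hx.
    destruct (dyadic_exists m x) as [j Hj].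
    pose proof (dyadic_index_le B m j x HB Hj Hx) as HjK; fold K in HjK.
    exists (Z.to_nat (j + Z.of_nat K)); split; [lia|].
    unfold A; replace (Z.of_nat (Z.to_nat (j + Z.of_nat K)) - Z.of_nat K)%Z with j by lia; auto.
  - intros; apply borel_dyadic.
  - intros i i' x _ _ Hii' Hi Hi'; apply Hii'; pose proof (dyadic_unique _ _ _ _ Hi Hi'); lia.
Qed.

Lemma window_size_le m : INR (S (2 * dyadic_radius B m)) <= (2 * B + 3) * 2 ^ m.
Proof.
  pose proof (dyadic_radius_bounds B m HB); pose proof (pow_R1_Rle 2 m ltac:(lra)).
  rewrite S_INR, mult_INR; simpl (INR 2); nra.
Qed.

Lemma S_sum_bounds q m : 0 < q ->
  rpow (/ INR (S (2 * dyadic_radius B m))) q <= S_sum mu q m <= INR (S (2 * dyadic_radius B m)).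
Proof.
  intros Hq; rewrite (S_sum_window q m (dyadic_radius B m)) by lia.
  rewrite <- length_window; split.
  - (* some interval of the window carries at least the mean mass *)
    destruct (lsum_exists_ge_mean _ _ (window_neq_nil _) (mass_window m)) as (j & Hj & Hmass).
    apply Rle_trans with (rpow (mu (dyadic m j)) q).
    + apply rpow_le_compat; [|lra]; split; auto.
      left; apply Rinv_0_lt_compat, lt_0_INR; rewrite length_window; lia.
    + apply (lsum_ge_elem (fun j => rpow (mu (dyadic m j)) q)); auto using rpow_ge_0.
  - rewrite <- (Rmult_1_r (INR _)), <- lsum_const; apply lsum_le; intros j _.
    apply rpow_le_1; auto; apply mu_le_1, borel_dyadic; auto.
Qed.

Lemma S_sum_pos q m : 0 < q -> 0 < S_sum mu q m.
Proof.
  intros Hq; eapply Rlt_le_trans; [|apply S_sum_bounds, Hq].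
  apply rpow_gt_0, Rinv_0_lt_compat, lt_0_INR; lia.
Qed.

Lemma log2_S_sum_bounds q m : 0 < q ->
  - q * (log2 (2 * B + 3) + INR m) <= log2 (S_sum mu q m) <= log2 (2 * B + 3) + INR m.
Proof.
  intros Hq; set (N := INR (S (2 * dyadic_radius B m))).
  assert (HN : 0 < N) by (apply lt_0_INR; lia).
  assert (HlogN : log2 N <= log2 (2 * B + 3) + INR m).
  { rewrite <- log2_pow2, <- log2_mult by (pose proof (pow2_pos m); lra).
    apply log2_le, window_size_le; auto. }
  destruct (S_sum_bounds q m Hq) as [Hlo Hhi]; fold N in Hlo, Hhi.
  split.
  - apply Rle_trans with (log2 (rpow (/ N) q));
      [|apply log2_le; auto using rpow_gt_0, Rinv_0_lt_compat].
    rewrite rpow_pos, log2_Rpower by (apply Rinv_0_lt_compat; auto).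
    rewrite log2_inv by auto; nra.
  - apply Rle_trans with (log2 N); [apply log2_le; auto using S_sum_pos | auto].
Qed.

Lemma tau_seq_bounds q m : 0 < q -> (1 <= m)%nat ->
  - (log2 (2 * B + 3) + 1) <= tau_seq mu q m <= q * (log2 (2 * B + 3) + 1).
Proof.
  intros Hq Hm; unfold tau_seq.
  set (L := log2 (2 * B + 3)).
  assert (HL : 0 <= L) by (apply log2_ge_0; lra).
  destruct (log2_S_sum_bounds q m Hq) as [Hlo Hhi]; fold L in Hlo, Hhi.
  assert (Hm1 : 1 <= INR m) by (apply (le_INR 1); auto).
  assert (Hinv : 0 < / INR m <= 1)
    by (split; [apply Rinv_0_lt_compat | rewrite <- Rinv_1; apply Rinv_le_contravar]; lra).
  assert (Hmm : / INR m * INR m = 1) by (field; lra).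
  assert (Hr : / INR m * (L + INR m) <= L + 1).
  { assert (/ INR m * L <= L) by (rewrite <- (Rmult_1_l L) at 2; apply Rmult_le_compat_r; lra).
    lra. }
  split.
  - assert (/ INR m * log2 (S_sum mu q m) <= / INR m * (L + INR m))
      by (apply Rmult_le_compat_l; lra).
    lra.
  - assert (/ INR m * (- q * (L + INR m)) <= / INR m * log2 (S_sum mu q m))
      by (apply Rmult_le_compat_l; lra).
    assert (q * (/ INR m * (L + INR m)) <= q * (L + 1)) by (apply Rmult_le_compat_l; lra); lra.
Qed.

Lemma tau_is_liminf q : 0 < q -> is_liminf (tau_seq mu q) (tau mu q).
Proof.
  intros Hq; apply (is_liminf_Rliminf _ (- (log2 (2 * B + 3) + 1)) (q * (log2 (2 * B + 3) + 1)) 1).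
  intros m; apply tau_seq_bounds, Hq.
Qed.

Lemma tau_seq_concave x y z m : 0 < x < y -> y < z -> (1 <= m)%nat ->
  (z - y) * tau_seq mu x m + (y - x) * tau_seq mu z m <= (z - x) * tau_seq mu y m.
Proof.
  intros Hxy Hyz Hm; unfold tau_seq.
  set (l := (z - y) / (z - x)).
  assert (Hw : (z - x) * l = z - y) by (unfold l; field; lra).
  assert (Hl : 0 < l < 1) by (split; nra).
  set (Sx := S_sum mu x m); set (Sy := S_sum mu y m); set (Sz := S_sum mu z m).
  assert (HSx : 0 < Sx) by (apply S_sum_pos; lra).
  assert (HSy : 0 < Sy) by (apply S_sum_pos; lra).
  assert (HSz : 0 < Sz) by (apply S_sum_pos; lra).
  (* Hoelder's inequality with exponents 1/l and 1/(1-l), since y = l x + (1 - l) z *)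
  assert (Hholder : Sy <= rpow Sx l * rpow Sz (1 - l)).
  { unfold Sx, Sy, Sz; rewrite !(S_sum_window _ m (dyadic_radius B m)) by lia.
    rewrite <- lsum_holder by (auto; intros; apply rpow_ge_0).
    apply Req_le, lsum_ext; intros j _.
    rewrite !rpow_rpow, <- rpow_plus; f_equal; unfold l; field; lra. }
  apply log2_le in Hholder; auto.
  rewrite log2_mult, !rpow_pos, !log2_Rpower in Hholder by (auto; apply rpow_gt_0; auto).
  assert (Hm1 : 0 < / INR m) by (apply Rinv_0_lt_compat, (lt_INR 0); lia).
  assert (0 <= / INR m * (z - x) * (l * log2 Sx + (1 - l) * log2 Sz - log2 Sy))
    by (apply Rmult_le_pos; [apply Rmult_le_pos|]; lra).
  nra.
Qed.

Lemma tau_concave : concave_on_pos (tau mu).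
Proof.
  intros x y z Hxy Hyz.
  replace (z - x) with ((z - y) + (y - x)) by ring.
  apply (is_liminf_combination (tau_seq mu x) (tau_seq mu y) (tau_seq mu z) _ _ _ _ _ 1%nat);
    try apply tau_is_liminf; try lra.
  intros m Hm; replace ((z - y) + (y - x)) with (z - x) by ring; apply tau_seq_concave; auto.
Qed.

Lemma tau_star_le_tangent a q0 : 0 < q0 -> derivable_pt_lim (tau mu) q0 a ->
  tau_star mu a <= a * q0 - tau mu q0.
Proof.
  intros Hq0 Hd; apply Rinf_le with (a * q0 - tau mu q0); [|exists q0; auto].
  intros _ (q & Hq & ->).
  pose proof (concave_le_tangent (tau mu) q0 a q tau_concave Hq0 Hd Hq); lra.
Qed.

Lemma S_sum_eventually_le q eta : 0 < q -> 0 < eta ->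
  exists N, forall m, (N <= m)%nat -> S_sum mu q m <= Rpower 2 (- (tau mu q - eta) * INR m).
Proof.
  intros Hq Heta; destruct (proj1 (tau_is_liminf q Hq) eta Heta) as [N HN].
  exists (S N); intros m Hm; specialize (HN m ltac:(lia)); unfold tau_seq in HN.
  assert (Hm1 : 0 < INR m) by (apply (lt_INR 0); lia).
  rewrite <- (Rpower_2_log2 (S_sum mu q m)) by (apply S_sum_pos; auto).
  apply Rle_Rpower; [lra|].
  apply Rmult_lt_compat_r with (r := INR m) in HN; auto.
  replace (- / INR m * log2 (S_sum mu q m) * INR m) with (- log2 (S_sum mu q m)) in HN
    by (field; lra).
  lra.
Qed.

Lemma lsum_dyadic_le_S_sum q m (D : list Z) : NoDup D ->
  lsum (fun j => rpow (mu (dyadic m j)) q) D <= S_sum mu q m.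
Proof.
  intros HD.
  assert (HK : exists K, forall j, In j D -> (Z.abs j <= Z.of_nat K)%Z).
  { clear HD; induction D as [|j D [K HK]]; [exists 0%nat; intros _ []|].
    exists (Nat.max K (Z.to_nat (Z.abs j))); intros i [<-|Hi]; [|specialize (HK i Hi)]; lia. }
  destruct HK as [K HK].
  rewrite (S_sum_window q m (Nat.max K (dyadic_radius B m))) by lia.
  apply lsum_incl_le; auto using rpow_ge_0.
  intros j Hj; apply In_window; specialize (HK j Hj); lia.
Qed.

End BoundedSupport.

Lemma rpow_interpolate_Rpower_2 X Y a c l : 0 <= X <= Rpower 2 a -> 0 <= Y <= Rpower 2 c ->
  0 < l < 1 -> rpow X l * rpow Y (1 - l) <= Rpower 2 (a * l + c * (1 - l)).
Proof.
  intros HX HY Hl; rewrite Rpower_plus, <- !rpow_Rpower_2.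
  apply Rmult_le_compat; auto using rpow_ge_0; apply rpow_le_compat; lra.
Qed.

Lemma interpolated_exponent_le q0 d a t0 tq ts kappa m : 0 < q0 -> 0 < d -> 0 <= m ->
  d * (a - kappa / (4 * q0)) < tq - t0 -> ts <= a * q0 - t0 ->
  - (tq - kappa / (4 * q0) * d) * m * (q0 / (q0 + d)) + (ts - kappa) * m * (1 - q0 / (q0 + d))
    <= - (t0 + kappa * d / (2 * (q0 + d))) * m.
Proof.
  intros Hq0 Hd Hm Htq Hts.
  (* in [gap], the slope error and the liminf error each cost kappa d / 4 and
     eps costs kappa d / 2, while the counting bound gains kappa d *)
  set (theta := kappa / (4 * q0)) in *.
  assert (Htheta : theta * q0 = kappa / 4) by (unfold theta; field; lra).
  set (gap := - (tq - theta * d) * q0 + (ts - kappa) * d + t0 * (q0 + d) + kappa * d / 2).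
  assert (Hgap : gap <= 0).
  { assert (q0 * (d * (a - theta)) <= q0 * (tq - t0)) by (apply Rmult_le_compat_l; lra).
    assert (ts * d <= (a * q0 - t0) * d) by (apply Rmult_le_compat_r; lra).
    unfold gap; nra. }
  assert (Hinv : 0 < / (q0 + d)) by (apply Rinv_0_lt_compat; lra).
  assert (0 <= m * / (q0 + d) * - gap) by (apply Rmult_le_pos; [apply Rmult_le_pos|]; lra).
  replace (- (t0 + kappa * d / (2 * (q0 + d))) * m)
    with (- (tq - theta * d) * m * (q0 / (q0 + d)) + (ts - kappa) * m * (1 - q0 / (q0 + d))
          - m * / (q0 + d) * gap) by (unfold gap; field; lra).
  lra.
Qed.

Theorem lemma3p9 (mu : (R -> Prop) -> R) (q0 alpha0 : R) :
  is_borel_prob_measure mu ->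
  bounded_support mu ->
  1 < q0 ->
  derivable_pt_lim (tau mu) q0 alpha0 ->
  forall kappa : R, 0 < kappa ->
  exists eps : R, 0 < eps /\
  exists m0 : nat, forall m : nat, (m0 <= m)%nat ->
  forall Dp : list Z, NoDup Dp ->
  INR (length Dp) <= Rpower 2 ((tau_star mu alpha0 - kappa) * INR m) ->
  sum_list (map (fun j => rpow (mu (dyadic m j)) q0) Dp)
    <= Rpower 2 (- (tau mu q0 + eps) * INR m).
Proof.
  intros Hmu Hsupp Hq0 Hd kappa Hk.
  destruct (bounded_support_radius mu Hmu Hsupp) as (B & HB & HBsupp).
  assert (Htheta : 0 < kappa / (4 * q0)) by (apply Rdiv_lt_0_compat; lra).
  destruct (derivable_pt_lim_right_bounds _ _ _ _ Hd Htheta) as (d0 & Hd0 & Hslope).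
  set (d := d0 / 2); destruct (Hslope d ltac:(unfold d; lra)) as [Hslope_d _].
  (* interpolate the q0-moment between the (q0 + d)-moment and the counting bound *)
  destruct (S_sum_eventually_le mu B Hmu HB HBsupp (q0 + d) (kappa / (4 * q0) * d))
    as [N HN]; [unfold d; lra | apply Rmult_lt_0_compat; unfold d; lra |].
  exists (kappa * d / (2 * (q0 + d))); split; [apply Rdiv_lt_0_compat; unfold d; nra|].
  exists N; intros m Hm D HD Hlen.
  change (sum_list _) with (lsum (fun j => rpow (mu (dyadic m j)) q0) D).
  eapply Rle_trans.
  { apply (lsum_rpow_interpolate _ _ _ (q0 + d)); [|unfold d; lra].
    intros; apply mu_nonneg, borel_dyadic; auto. }
  eapply Rle_trans; [apply rpow_interpolate_Rpower_2|].
  - split; [apply lsum_nonneg; intros; apply rpow_ge_0|].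
    eapply Rle_trans; [apply (lsum_dyadic_le_S_sum mu B Hmu HB HBsupp _ _ D HD) | apply HN, Hm].
  - split; [apply pos_INR | apply Hlen].
  - apply Rdiv_in_01; unfold d; lra.
  - apply Rle_Rpower; [lra|].
    apply interpolated_exponent_le with alpha0; unfold d; auto using pos_INR; try lra.
    apply tau_star_le_tangent with B; auto; lra.
Qed.
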